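(* Let $\alpha,\beta$ be $H$-colorings of $G$ and $q\in V(G)$. If $Q\in\pi(H)$ is realizable for $\alpha,\beta,q$, then $Q$ is topologically valid for $\alpha,\beta,q$.
   Context: All graphs are finite and undirected. $G$ is a connected loopless graph with at least one edge. $H$ is a connected graph with at least one edge, possibly with loops, having the monochromatic neighborhood property: for all $a,b\in V(H)$, $|N_H(a)\cap N_H(b)|\le 1$, where $N_H(a)=\{w: aw\in E(H)\}$. An $H$-coloring of $G$ is a map $\sigma:V(G)\to V(H)$ such that $uv\in E(G)$ implies $\sigma(u)\sigma(v)\in E(H)$. An $H$-recoloring sequence is a sequence $\sigma_0,\dots,\sigma_l$ of $H$-colorings of $G$ in which consecutive colorings differ in the color of exactly one vertex. Walks: an oriented edge is an ordered pair $(x,y)$ with $xy$ an edge; $(x,y)^{-1}=(y,x)$. A walk from $x$ to $y$ is a sequence of oriented edges, consecutive ones sharing endpoints, starting at $x$ and ending at $y$; $\varepsilon$ is the empty walk; $W^{-1}$ the reversed walk; $W_1W_2$ concatenation. A walk is reduced if no two consecutive edges $e_ie_{i+1}$ satisfy $e_{i+1}=e_i^{-1}$; $\overline{W}$ is the unique reduced walk obtained by repeatedly deleting such pairs. $A\cdot B:=\overline{AB}$ for reduced $A,B$ with $B$ starting where $A$ ends. $\pi(H)$ is the set of reduced walks in $H$. For a walk $W=(x_0,x_1)\dots(x_{k-1},x_k)$ in $G$, $\alpha(W)=(\alpha(x_0),\alpha(x_1))\dots(\alpha(x_{k-1}),\alpha(x_k))$. Vertex walks: in a one-step sequence $\sigma_0,\sigma_1$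 where vertex $w$ changes from $a$ to $b\ne a$, all neighbors of $w$ have a common color $h$ (the unique element of $N_H(a)\cap N_H(b)$); set $S(w)=(a,h)(h,b)$ and $S(v)=\varepsilon$ for $v\ne w$. For the empty sequence $S(v)=\varepsilon$; for longer sequences $S(v)$ is the concatenation of the one-step walks in order. Realizable: $Q\in\pi(H)$ is realizable for $\alpha,\beta,q$ if there is an $H$-recoloring sequence $S=\sigma_0,\dots,\sigma_l$ with $\sigma_0=\alpha$, $\sigma_l=\beta$, $\overline{S(q)}=Q$. Topologically valid: a reduced walk $Q$ in $H$ from $\alpha(q)$ to $\beta(q)$ is topologically valid for $\alpha,\beta,q$ if for every closed walk $C$ in $G$ from $q$ to $q$, $\overline{\beta(C)}=Q^{-1}\cdot\overline{\alpha(C)}\cdot Q$. *)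

From mathcomp Require Import all_boot.
Set Implicit Arguments. Unset Strict Implicit. Unset Printing Implicit Defensive.

Section Defs.

(* A graph on a finite vertex type V is a symmetric boolean relation e; e x x
   means a loop at x. *)
Definition graph_connected (V : finType) (e : rel V) : Prop :=
  forall x y : V, connect e x y.

Definition mono_nbhd (V : finType) (e : rel V) : Prop :=
  forall a b : V, a != b -> #|[set w | e a w && e b w]| <= 1.

Definition oedge_inv (T : Type) (x : T * T) : T * T := (x.2, x.1).

Fixpoint is_walk (T : eqType) (e : rel T) (x : T) (W : seq (T * T)) (y : T)
  : bool :=
  match W with
  | [::] => x == y
  | p :: W' => [&& p.1 == x, e p.1 p.2 & is_walk e p.2 W' y]
  end.

Fixpoint reduced (T : eqType) (W : seq (T * T)) : bool :=
  match W with
  | [::] => true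
  | p :: W' =>
      match W' with
      | [::] => true
      | p' :: _ => (p' != oedge_inv p) && reduced W'
      end
  end.

Fixpoint reduce (T : eqType) (W : seq (T * T)) : seq (T * T) :=
  match W with
  | [::] => [::]
  | p :: W' =>
      match reduce W' with
      | p' :: W'' => if p' == oedge_inv p then W'' else p :: p' :: W''
      | [::] => [:: p]
      end
  end.

Definition rev_walk (T : Type) (W : seq (T * T)) : seq (T * T) :=
  rev (map (@oedge_inv T) W).

Definition wdot (T : eqType) (A B : seq (T * T)) : seq (T * T) :=
  reduce (A ++ B).

Definition map_walk (T U : Type) (f : T -> U) (W : seq (T * T)) : seq (U * U) :=
  map (fun p => (f p.1, f p.2)) W.

Definition in_pi (T : eqType) (e : rel T) (Q : seq (T * T)) : Prop :=
  exists x y, is_walk e x Q y /\ reduced Q.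

Definition is_Hcoloring (VG VH : finType) (eG : rel VG) (eH : rel VH)
  (s : VG -> VH) : Prop :=
  forall u v, eG u v -> eH (s u) (s v).

Fixpoint recol_seq_from (VG VH : finType) (eG : rel VG) (eH : rel VH)
  (s0 : VG -> VH) (rest : seq (VG -> VH)) : Prop :=
  match rest with
  | [::] => True
  | s1 :: r => is_Hcoloring eG eH s1 /\
               #|[set v | s0 v != s1 v]| = 1 /\
               recol_seq_from eG eH s1 r
  end.

Definition recol_seq (VG VH : finType) (eG : rel VG) (eH : rel VH)
  (s0 : VG -> VH) (rest : seq (VG -> VH)) : Prop :=
  is_Hcoloring eG eH s0 /\ recol_seq_from eG eH s0 rest.

(* one-step vertex walk: if v changes from a to b, S(v) = (a,h)(h,b) where h
   is the (unique) common neighbour of a and b in H *)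
Definition step_walk (VG VH : finType) (eH : rel VH)
  (s0 s1 : VG -> VH) (v : VG) : seq (VH * VH) :=
  let a := s0 v in let b := s1 v in
  if a == b then [::] else
  match [pick h | eH a h && eH b h] with
  | Some h => [:: (a, h); (h, b)]
  | None => [::]
  end.

Fixpoint vertex_walk (VG VH : finType) (eH : rel VH)
  (s0 : VG -> VH) (rest : seq (VG -> VH)) (v : VG) : seq (VH * VH) :=
  match rest with
  | [::] => [::]
  | s1 :: r => step_walk eH s0 s1 v ++ vertex_walk eH s1 r v
  end.

Definition realizable (VG VH : finType) (eG : rel VG) (eH : rel VH)
  (alpha beta : VG -> VH) (q : VG) (Q : seq (VH * VH)) : Prop :=
  exists rest : seq (VG -> VH),
    [/\ recol_seq eG eH alpha rest,
        last alpha rest = beta &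
        reduce (vertex_walk eH alpha rest q) = Q].

Definition topologically_valid (VG VH : finType) (eG : rel VG) (eH : rel VH)
  (alpha beta : VG -> VH) (q : VG) (Q : seq (VH * VH)) : Prop :=
  is_walk eH (alpha q) Q (beta q) /\ reduced Q /\
  forall C : seq (VG * VG), is_walk eG q C q ->
    reduce (map_walk beta C) =
      wdot (wdot (rev_walk Q) (reduce (map_walk alpha C))) Q.

End Defs.

From mathcomp Require Import all_boot.
Set Implicit Arguments. Unset Strict Implicit.

(* Free reduction makes walks up to backtracking a groupoid, in which
   [reduce A = reduce B] is homotopy of walks.  In a single recoloring step
   only one vertex w changes, from a to b, and all its neighbours carry the
   common neighbour h of a and b.  Hence every edge xz of G satisfies
   s1(xz) ~ S(x)^-1 s0(xz) S(z): if x = w this is (b,h) ~ (b,h)(h,a)(a,h).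
   Along a walk from x to y the inner factors telescope, giving
   s1(C) ~ S(x)^-1 s0(C) S(y), and an induction on the recoloring sequence
   composes these conjugations into beta(C) ~ S(q)^-1 alpha(C) S(q). *)

Lemma rev_walk_cat (T : Type) (A B : seq (T * T)) :
  rev_walk (A ++ B) = rev_walk B ++ rev_walk A.
Proof. by rewrite /rev_walk map_cat rev_cat. Qed.

Lemma rev_walk_cons (T : Type) (p : T * T) (A : seq (T * T)) :
  rev_walk (p :: A) = rev_walk A ++ [:: oedge_inv p].
Proof. by rewrite /rev_walk /= rev_cons cats1. Qed.

Lemma oedge_invK (T : Type) : involutive (@oedge_inv T).
Proof. by case. Qed.

Section FreeReduction.
Variable T : eqType.
Local Notation inv := (@oedge_inv T).
Implicit Types (p : T * T) (A B W X Y : seq (T * T)).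

Definition cons_red p W : seq (T * T) :=
  if W is p' :: W' then (if p' == inv p then W' else p :: W) else [:: p].

(* For reduced [W], [cat_red A W] is the reduced form of [A ++ W]: this is
   the action of the free groupoid on reduced walks. *)
Definition cat_red A W := foldr cons_red W A.

Lemma cat_red_cat X Y W : cat_red (X ++ Y) W = cat_red X (cat_red Y W).
Proof. exact: foldr_cat. Qed.

Lemma reduce_cons p W : reduce (p :: W) = cons_red p (reduce W).
Proof. by rewrite /=; case: (reduce W). Qed.

Lemma reduce_cat A B : reduce (A ++ B) = cat_red A (reduce B).
Proof. by elim: A => //= p A <-; rewrite -reduce_cons. Qed.

Lemma reduced_behead p W : reduced (p :: W) -> reduced W.
Proof. by case: W => //= p' W /andP[]. Qed.

Lemma reduced_cons_red p W : reduced W -> reduced (cons_red p W).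
Proof.
case: W => //= p' W HW; case: ifP => [_ | Hp]; first exact: reduced_behead HW.
by rewrite /= Hp HW.
Qed.

Lemma cons_red_reduced p W : reduced (p :: W) -> cons_red p W = p :: W.
Proof. by case: W => //= p' W /andP[/negbTE ->]. Qed.

Lemma reduced_cat_red A W : reduced W -> reduced (cat_red A W).
Proof. by elim: A => //= p A IH /IH; apply: reduced_cons_red. Qed.

Lemma reduce_reduced A : reduced (reduce A).
Proof. by elim: A => // p A IH; rewrite reduce_cons reduced_cons_red. Qed.

Lemma reduce_id W : reduced W -> reduce W = W.
Proof.
elim: W => // p W IH HW.
by rewrite reduce_cons IH ?(reduced_behead HW) // cons_red_reduced.
Qed.

Lemma cons_redK p W : reduced W -> cons_red p (cons_red (inv p) W) = W.
Proof.
case: W => [|p' W] HW; first by rewrite /cons_red eqxx.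
rewrite {2}/cons_red oedge_invK; case: eqP HW => [-> HW | _ _].
  by rewrite cons_red_reduced.
by rewrite /cons_red eqxx.
Qed.

Lemma cons_redKV p W : reduced W -> cons_red (inv p) (cons_red p W) = W.
Proof. by move=> HW; rewrite -{2}(oedge_invK p) cons_redK. Qed.

Lemma cons_red_cat_red p A W : reduced A -> reduced W ->
  cons_red p (cat_red A W) = cat_red (cons_red p A) W.
Proof.
case: A => [|p' A] // HA HW; rewrite {2}/cons_red; case: eqP => [-> | //].
by rewrite /= cons_redK // reduced_cat_red.
Qed.

Lemma cat_red_reduce A W : reduced W -> cat_red (reduce A) W = cat_red A W.
Proof.
move=> HW; elim: A => // p A IH.
by rewrite reduce_cons -cons_red_cat_red ?reduce_reduced // IH.
Qed.

Lemma cat_redK A W : reduced W -> cat_red (rev_walk A) (cat_red A W) = W.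
Proof.
elim: A W => //= p A IH W HW.
by rewrite rev_walk_cons cat_red_cat /= cons_redKV ?IH // reduced_cat_red.
Qed.

Lemma cat_redKV A W : reduced W -> cat_red A (cat_red (rev_walk A) W) = W.
Proof.
elim: A W => //= p A IH W HW.
by rewrite rev_walk_cons cat_red_cat /= IH ?cons_redK // reduced_cons_red.
Qed.

Lemma cat_red_rev_reduce A W :
  reduced W -> cat_red (rev_walk (reduce A)) W = cat_red (rev_walk A) W.
Proof.
move=> HW; rewrite -{1}(cat_redK A (reduced_cat_red (rev_walk (reduce A)) HW)).
by rewrite -(cat_red_reduce A (reduced_cat_red _ HW)) cat_redKV.
Qed.

Lemma reduce_catl A B : reduce (reduce A ++ B) = reduce (A ++ B).
Proof. by rewrite !reduce_cat cat_red_reduce // reduce_reduced. Qed.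

Lemma reduce_catr A B : reduce (A ++ reduce B) = reduce (A ++ B).
Proof. by rewrite !reduce_cat reduce_id // reduce_reduced. Qed.

Lemma reduce_cat_cancel X A Y :
  reduce (X ++ A ++ rev_walk A ++ Y) = reduce (X ++ Y).
Proof. by rewrite !reduce_cat cat_redKV // reduce_reduced. Qed.

Lemma reduce_rev_walk_cat A : reduce (rev_walk A ++ A) = [::].
Proof. by rewrite -(cats0 (_ ++ A)) -catA !reduce_cat cat_redK. Qed.

Lemma reduce_catCl X A B Y : reduce A = reduce B ->
  reduce (X ++ A ++ Y) = reduce (X ++ B ++ Y).
Proof.
move=> AB; rewrite !reduce_cat -(cat_red_reduce A) ?reduce_reduced //.
by rewrite -(cat_red_reduce B) ?AB // reduce_reduced.
Qed.

Lemma wdot_conj A B :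
  wdot (wdot (rev_walk (reduce A)) (reduce B)) (reduce A) =
  reduce (rev_walk A ++ B ++ A).
Proof.
rewrite /wdot reduce_catl -catA !reduce_cat (reduce_id (reduce_reduced A)).
by rewrite cat_red_reduce ?cat_red_rev_reduce ?reduced_cat_red ?reduce_reduced.
Qed.

Variable e : rel T.

Lemma walk_cat x A y B z :
  is_walk e x A y -> is_walk e y B z -> is_walk e x (A ++ B) z.
Proof.
elim: A x => [|p A IH] x /=; first by move/eqP->.
by case/and3P=> -> -> /IH H /H ->.
Qed.

Lemma walk_cons_red p W y :
  e p.1 p.2 -> is_walk e p.2 W y -> is_walk e p.1 (cons_red p W) y.
Proof.
case: W => [|p' W] /= He; first by move=> ->; rewrite eqxx He.
case: ifP => [/eqP -> | _] /=; last by move=> HW; rewrite eqxx He.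
by case/and3P.
Qed.

Lemma walk_reduce x W y : is_walk e x W y -> is_walk e x (reduce W) y.
Proof.
elim: W x => [|p W IH] x //; rewrite reduce_cons /=.
by case/and3P=> /eqP <- He /IH; apply: walk_cons_red.
Qed.

End FreeReduction.

Lemma connected_neighbour (V : finType) (e : rel V) :
  graph_connected e -> (exists u v, e u v) -> forall v, exists u, e v u.
Proof.
move=> conn [u0 [v0 Huv]] v; have /connectP[p Hp Hl] := conn v u0.
case: p Hp Hl => [|u p] /=; first by move=> _ <-; exists v0.
by case/andP=> Hvu _ _; exists u.
Qed.

Section RecoloringStep.
Variables (VG VH : finType) (eG : rel VG) (eH : rel VH).
Hypotheses (eG_sym : symmetric eG) (eG_irr : irreflexive eG).
Hypothesis eH_mnp : mono_nbhd eH.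
Variables s0 s1 : VG -> VH.
Hypotheses (s0_col : is_Hcoloring eG eH s0) (s1_col : is_Hcoloring eG eH s1).
Hypothesis single_change : #|[set v | s0 v != s1 v]| <= 1.
Local Notation S := (step_walk eH s0 s1).

Lemma changed_unique u v : s0 u != s1 u -> s0 v != s1 v -> u = v.
Proof. by move=> Hu Hv; apply: (card_le1_eqP single_change); rewrite inE. Qed.

Lemma step_walk_changed v u : s0 v != s1 v -> eG v u ->
  S v = [:: (s0 v, s0 u); (s0 u, s1 v)] /\ s1 u = s0 u.
Proof.
move=> Hv Hvu.
have Hu : s1 u = s0 u.
  apply/eqP; rewrite eq_sym; apply: contraTT Hvu => Hu.
  by rewrite (changed_unique Hu Hv) eG_irr.
split=> //; rewrite /step_walk (negbTE Hv).
have Hu_common : s0 u \in [set w | eH (s0 v) w && eH (s1 v) w].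
  by rewrite inE s0_col // -Hu s1_col.
case: pickP => [h Hh | Hnone]; last by move: Hu_common; rewrite inE Hnone.
have Hh_common : h \in [set w | eH (s0 v) w && eH (s1 v) w] by rewrite inE.
by rewrite (card_le1_eqP (eH_mnp Hv) _ _ Hh_common Hu_common).
Qed.

Lemma step_walk_unchanged v : s0 v == s1 v -> S v = [::].
Proof. by rewrite /step_walk => ->. Qed.

Lemma step_walk_walk v : (exists u, eG v u) -> is_walk eH (s0 v) (S v) (s1 v).
Proof.
case=> u Hvu; case Ev: (s0 v == s1 v); first by rewrite step_walk_unchanged.
have [-> Hu] := step_walk_changed (negbT Ev) Hvu.
by rewrite /= !eqxx s0_col //= -{1}Hu s1_col // eG_sym.
Qed.

Lemma step_walk_edge x z : eG x z ->
  reduce [:: (s1 x, s1 z)] = reduce (rev_walk (S x) ++ [:: (s0 x, s0 z)] ++ S z).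
Proof.
move=> Hxz; case Ex: (s0 x == s1 x); case Ez: (s0 z == s1 z).
- by rewrite !step_walk_unchanged //= (eqP Ex) (eqP Ez).
- have Hzx : eG z x by rewrite eG_sym.
  have [-> Hx] := step_walk_changed (negbT Ez) Hzx.
  rewrite step_walk_unchanged // Hx.
  exact: esym (reduce_cat_cancel [::] [:: (s0 x, s0 z)] [:: (s0 x, s1 z)]).
- have [-> Hz] := step_walk_changed (negbT Ex) Hxz.
  rewrite step_walk_unchanged // Hz.
  exact: esym (reduce_cat_cancel [:: (s1 x, s0 z)] [:: (s0 z, s0 x)] [::]).
- by move: Hxz; rewrite (changed_unique (negbT Ex) (negbT Ez)) eG_irr.
Qed.

Lemma step_walk_conj x C y : is_walk eG x C y ->
  reduce (map_walk s1 C) = reduce (rev_walk (S x) ++ map_walk s0 C ++ S y).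
Proof.
elim: C x => [|[a z] C IH] x; first by move/eqP <-; rewrite reduce_rev_walk_cat.
rewrite [is_walk _ _ _ _]/= => /and3P[/eqP -> Hxz /IH IHz].
rewrite -[map_walk s1 _]/([:: (s1 x, s1 z)] ++ map_walk s1 C).
rewrite -reduce_catr IHz reduce_catr -[_ ++ _]cat0s.
rewrite (reduce_catCl _ _ (step_walk_edge Hxz)) cat0s -!catA.
by rewrite (catA (rev_walk (S x)) [:: (s0 x, s0 z)]) reduce_cat_cancel -catA.
Qed.

End RecoloringStep.

Section VertexWalk.
Variables (VG VH : finType) (eG : rel VG) (eH : rel VH).
Hypotheses (eG_sym : symmetric eG) (eG_irr : irreflexive eG).
Hypothesis eH_mnp : mono_nbhd eH.

Lemma vertex_walk_walk q rest s0 : (exists u, eG q u) ->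
  is_Hcoloring eG eH s0 -> recol_seq_from eG eH s0 rest ->
  is_walk eH (s0 q) (vertex_walk eH s0 rest q) (last s0 rest q).
Proof.
move=> q_nb; elim: rest s0 => [|s1 rest IH] s0 s0_col //= [s1_col [Hcard Hrest]].
have single_change : #|[set v | s0 v != s1 v]| <= 1 by rewrite Hcard.
apply: walk_cat (IH s1 s1_col Hrest).
exact: (step_walk_walk eG_sym eG_irr eH_mnp s0_col s1_col single_change q_nb).
Qed.

Lemma vertex_walk_conj rest s0 x C y :
  is_Hcoloring eG eH s0 -> recol_seq_from eG eH s0 rest -> is_walk eG x C y ->
  reduce (map_walk (last s0 rest) C) =
  reduce (rev_walk (vertex_walk eH s0 rest x) ++ map_walk s0 C ++
          vertex_walk eH s0 rest y).
Proof.
move=> + + HC; elim: rest s0 => [|s1 rest IH] s0 s0_col /=; first by rewrite cats0.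
case=> s1_col [Hcard Hrest]; rewrite (IH s1 s1_col Hrest).
have single_change : #|[set v | s0 v != s1 v]| <= 1 by rewrite Hcard.
have step_conj := step_walk_conj eG_sym eG_irr eH_mnp s0_col s1_col single_change HC.
by rewrite (reduce_catCl _ _ step_conj) rev_walk_cat -!catA.
Qed.

End VertexWalk.

Theorem mainTheorem3 (VG VH : finType) (eG : rel VG) (eH : rel VH)
  (eG_sym : symmetric eG) (eG_irr : irreflexive eG)
  (eG_conn : graph_connected eG) (eG_edge : exists u v, eG u v)
  (eH_sym : symmetric eH)
  (eH_conn : graph_connected eH) (eH_edge : exists a b, eH a b)
  (eH_mnp : mono_nbhd eH)
  (alpha beta : VG -> VH)
  (alpha_col : is_Hcoloring eG eH alpha) (beta_col : is_Hcoloring eG eH beta)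
  (q : VG) (Q : seq (VH * VH)) :
  in_pi eH Q ->
  realizable eG eH alpha beta q Q ->
  topologically_valid eG eH alpha beta q Q.
Proof.
move=> _ [rest [[_ Hrest] <- <-]].
have q_nb := connected_neighbour eG_conn eG_edge q.
split; first exact/walk_reduce/(vertex_walk_walk eG_sym eG_irr eH_mnp q_nb).
split=> [|C HC]; first exact: reduce_reduced.
by rewrite wdot_conj (vertex_walk_conj eG_sym eG_irr eH_mnp alpha_col Hrest HC).
Qed.
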